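(* Let $(x_1,y_1),\dots,(x_m,y_m)$ be observations with $x_i\in[N]$ and labels $y_i\in[0,M]$. For $j\in[N]$ let $\mu(j)=\frac{\sum_i[x_i\le j]y_i}{\sum_i[x_i\le j]}$, $\gamma(j)=\frac{\sum_i[x_i>j]y_i}{\sum_i[x_i>j]}$ and $L(j)=\frac1m\Big(\sum_{i=1}^m[x_i\le j](y_i-\mu(j))^2+\sum_{i=1}^m[x_i>j](y_i-\gamma(j))^2\Big)$. Then for any $j'>j$, setting $b=\sum_{i=1}^m[j<x_i\le j']$, we have $L(j')\le L(j)+\frac{5bM^2}{4m}$.
   Context: $[N]=\{1,\dots,N\}$ and $[E]$ denotes the indicator of event $E$. If one side of a split is empty, the corresponding sum is empty and contributes $0$. *)

From mathcomp Require Import all_boot all_order all_algebra.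
Set Implicit Arguments. Unset Strict Implicit. Unset Printing Implicit Defensive.
Import Order.TTheory GRing.Theory Num.Theory.
Local Open Scope ring_scope.

(* Indicator sums are written as
   filtered big sums; an empty sum is 0, and division by 0 is 0 in MathComp,
   so an empty side contributes 0 as required by the context. *)

Definition mu (R : realFieldType) (m : nat) (x : 'I_m -> nat) (y : 'I_m -> R)
  (j : nat) : R :=
  (\sum_(i < m | (x i <= j)%N) y i) / (\sum_(i < m | (x i <= j)%N) 1).

Definition gamma (R : realFieldType) (m : nat) (x : 'I_m -> nat) (y : 'I_m -> R)
  (j : nat) : R :=
  (\sum_(i < m | (j < x i)%N) y i) / (\sum_(i < m | (j < x i)%N) 1).

Definition L (R : realFieldType) (m : nat) (x : 'I_m -> nat) (y : 'I_m -> R)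
  (j : nat) : R :=
  m%:R^-1 * (\sum_(i < m | (x i <= j)%N) (y i - mu x y j) ^+ 2
           + \sum_(i < m | (j < x i)%N) (y i - gamma x y j) ^+ 2).

(* A split's loss is the sum of the within-group squared errors about the two
   group means, and the mean minimises the squared error of a group.  Moving
   the threshold from j to j' moves the b points with j < x_i <= j' from the
   right group to the left one.  Measuring the new left group about the old
   left mean costs at most M^2 per moved point, since both the label and that
   mean lie in [0, M]; the new right group is a subset of the old one, so its
   squared error about the old right mean can only drop.  This even gives the
   sharper bound L(j') <= L(j) + b M^2 / m. *)

From mathcomp Require Import all_boot all_order all_algebra.
From mathcomp Require Import ring lra.
Set Implicit Arguments. Unset Strict Implicit. Unset Printing Implicit Defensive.
Import Order.TTheory GRing.Theory Num.Theory.
Local Open Scope ring_scope.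

Section GroupSquaredError.

Variables (R : realFieldType) (I : finType) (y : I -> R).

Definition mean (P : pred I) : R :=
  (\sum_(i | P i) y i) / (\sum_(i | P i) 1).

Definition sse (P : pred I) : R := \sum_(i | P i) (y i - mean P) ^+ 2.

Lemma sumr_const_mul (P : pred I) (c : R) :
  \sum_(i | P i) c = c * \sum_(i | P i) 1.
Proof. by rewrite mulr_sumr; apply: eq_bigr => i _; rewrite mulr1. Qed.

Lemma sumr_mean (P : pred I) :
  \sum_(i | P i) y i = (\sum_(i | P i) 1) * mean P.
Proof.
have [n0 | n_neq0] := eqVneq (\sum_(i | P i) (1 : R)) 0; last first.
  by rewrite mulrC divfK.
rewrite n0 mul0r big1 // => i Pi.
move/eqP: n0; rewrite psumr_eq0 // => /allP/(_ i (mem_index_enum i)).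
by rewrite Pi oner_eq0.
Qed.

Lemma sse_shift (P : pred I) (c : R) :
  \sum_(i | P i) (y i - c) ^+ 2 =
  sse P + (\sum_(i | P i) 1) * (mean P - c) ^+ 2.
Proof.
rewrite /sse (eq_bigr (fun i => (y i - mean P) ^+ 2
    + (mean P - c) *+ 2 * (y i - mean P) + (mean P - c) ^+ 2)); last first.
  by move=> i _; ring.
rewrite !big_split /= -mulr_sumr sumrB sumr_mean.
rewrite (sumr_const_mul _ (mean P)) [mean P * _]mulrC subrr mulr0 addr0.
by rewrite sumr_const_mul mulrC.
Qed.

Lemma sse_le (P : pred I) (c : R) : sse P <= \sum_(i | P i) (y i - c) ^+ 2.
Proof. by rewrite sse_shift lerDl mulr_ge0 ?sumr_ge0 ?sqr_ge0. Qed.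

Lemma sse_subpred_le (P Q : pred I) : subpred Q P -> sse Q <= sse P.
Proof.
move=> QP; apply: le_trans (sse_le Q (mean P)) _.
rewrite /sse [leRHS](bigID Q) /=.
have -> : \sum_(i | P i && Q i) (y i - mean P) ^+ 2
        = \sum_(i | Q i) (y i - mean P) ^+ 2.
  by apply: eq_bigl => i; case Qi: (Q i); rewrite ?andbT ?andbF ?QP.
by rewrite lerDl sumr_ge0 // => i _; apply: sqr_ge0.
Qed.

Lemma mean_ge0_le (P : pred I) (M : R) :
  0 <= M -> (forall i, P i -> 0 <= y i <= M) -> 0 <= mean P <= M.
Proof.
move=> M_ge0 hy.
have n_ge0 : 0 <= \sum_(i | P i) (1 : R) by apply: sumr_ge0.
have s_ge0 : 0 <= \sum_(i | P i) y i.
  by apply: sumr_ge0 => i /hy /andP[].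
have s_le : \sum_(i | P i) y i <= M * \sum_(i | P i) 1.
  by rewrite -sumr_const_mul; apply: ler_sum => i /hy /andP[].
rewrite /mean divr_ge0 //=.
have [n0 | n_neq0] := eqVneq (\sum_(i | P i) (1 : R)) 0.
  by rewrite n0 invr0 mulr0.
by rewrite ler_pdivrMr // lt0r n_neq0.
Qed.

Lemma sse_superpred_le (P Q : pred I) (M : R) :
  subpred P Q -> (forall i, 0 <= y i <= M) ->
  sse Q <= sse P + (\sum_(i | Q i && ~~ P i) 1) * M ^+ 2.
Proof.
move=> PQ hy; apply: le_trans (sse_le Q (mean P)) _.
rewrite /sse (bigID P) /=.
have -> : \sum_(i | Q i && P i) (y i - mean P) ^+ 2
        = \sum_(i | P i) (y i - mean P) ^+ 2.
  by apply: eq_bigl => i; case Pi: (P i); rewrite ?andbT ?andbF ?PQ.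
rewrite lerD2l mulr_suml; apply: ler_sum => i _; rewrite mul1r.
have /andP[yi_ge0 yi_le] := hy i.
have /andP[mu_ge0 mu_le] : 0 <= mean P <= M.
  by apply: mean_ge0_le => [|k _]; [apply: le_trans yi_le | apply: hy].
nra.
Qed.

End GroupSquaredError.

Lemma L_sse (R : realFieldType) (m : nat) (x : 'I_m -> nat) (y : 'I_m -> R)
    (j : nat) :
  L x y j =
  m%:R^-1 * (sse y (fun i => (x i <= j)%N) + sse y (fun i => (j < x i)%N)).
Proof. by []. Qed.

Theorem lemma2 (R : realFieldType) (N m : nat) (M : R)
  (x : 'I_m -> nat) (y : 'I_m -> R)
  (hx : forall i, (1 <= x i <= N)%N)
  (hy : forall i, 0 <= y i <= M)
  (j j' : nat) (hj : (1 <= j <= N)%N) (hj' : (j' <= N)%N) (hjj' : (j < j')%N) :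
  let b : R := \sum_(i < m | (j < x i <= j')%N) 1 in
  L x y j' <= L x y j + 5%:R * b * M ^+ 2 / (4%:R * m%:R).
Proof.
rewrite /= !L_sse; set b := \sum_(i < m | (j < x i <= j')%N) (1 : R).
have grow_left : sse y (fun i => (x i <= j')%N)
    <= sse y (fun i => (x i <= j)%N) + b * M ^+ 2.
  have -> : b = \sum_(i < m | (x i <= j')%N && ~~ (x i <= j)%N) 1.
    by apply: eq_bigl => i; rewrite -ltnNge andbC.
  by apply: sse_superpred_le => // i /leq_trans; apply; apply: ltnW.
have shrink_right : sse y (fun i => (j' < x i)%N) <= sse y (fun i => (j < x i)%N).
  by apply: sse_subpred_le => i; apply: ltn_trans.
have u_ge0 : 0 <= m%:R^-1 :> R by rewrite invr_ge0.
have bM_ge0 : 0 <= b * M ^+ 2 by rewrite mulr_ge0 ?sumr_ge0 ?sqr_ge0.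
apply: le_trans (ler_wpM2l u_ge0 (lerD grow_left shrink_right)) _.
rewrite invfM; nra.
Qed.
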